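(* Let $\upsilon$ be a positive integer, let $n,m$ be nonnegative integers, $N=\max\{n,m\}$, and let $p,q$ be real numbers with $p>(\upsilon+1)N+1$ and $q>-1$. Then $$\int_0^\infty \frac{x^{q}}{(1+x)^{p+q}}\,M_n(p,q,\upsilon;x)\,\mathfrak{M}_m(p,q,\upsilon;x)\,dx=\frac{n!\,\Gamma(p-n)\,\Gamma(q+1+\upsilon n)}{(p-1-n-\upsilon n)\,\Gamma(p+q-n)}\,\delta_{n,m},$$ where $\delta_{n,m}$ is the Kronecker delta.
   Context: $(a)_k=a(a+1)\cdots(a+k-1)$, $(a)_0=1$, denotes the Pochhammer symbol. For a positive integer $\upsilon$, a nonnegative integer $n$ and real parameters $p,q$ define $$M_n(p,q,\upsilon;x)=(-1)^n(q+1)_{\upsilon n}\sum_{j=0}^{n}(-1)^j\binom{n}{j}\frac{(n+1-p)_{\upsilon j}}{(q+1)_{\upsilon j}}(-x)^{\upsilon j},$$ $$\mathfrak{M}_n(p,q,\upsilon;x)=\sum_{r=0}^{n}\sum_{s=0}^{r}(-1)^{s+n}\binom{r}{s}\frac{(p+q-n)_r}{r!}\left(\frac{s+q+1}{\upsilon}\right)_n x^r(1+x)^{n-r}.$$ *)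

From Stdlib Require Import Reals Factorial.
From Coquelicot Require Import Coquelicot.
Open Scope R_scope.

Fixpoint poch (a : R) (k : nat) : R :=
  match k with
  | O => 1
  | S k' => poch a k' * (a + INR k')
  end.

Definition binomR (n j : nat) : R := Stdlib.Reals.Binomial.C n j.

Definition Gamma (s : R) : R :=
  RInt_gen (fun t => Rpower t (s - 1) * exp (- t))
           (at_right 0) (Rbar_locally p_infty).

Definition Mpoly (n : nat) (p q : R) (u : nat) (x : R) : R :=
  (-1) ^ n * poch (q + 1) (u * n)
  * sum_f_R0 (fun j => (-1) ^ j * binomR n j
        * poch (INR n + 1 - p) (u * j) / poch (q + 1) (u * j)
        * (- x) ^ (u * j)) n.

Definition frakM (n : nat) (p q : R) (u : nat) (x : R) : R :=
  sum_f_R0 (fun r =>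
    sum_f_R0 (fun s =>
      (-1) ^ (s + n) * binomR r s * (poch (p + q - INR n) r / INR (fact r))
      * poch ((INR s + q + 1) / INR u) n * x ^ r * (1 + x) ^ (n - r)) r) n.

Definition kron_delta (n m : nat) : R := if Nat.eqb n m then 1 else 0.

(* Expanding [M_n] and [frakM_m], the integrand becomes a combination of the
   functions x^q (1+x)^(-p-q) x^k (1+x)^l, each of which integrates to the Beta value
   Gamma(q+1+k) Gamma(p-1-k-l) / Gamma(p+q-l); the Beta-Gamma relation is obtained from
   the Bohr-Mollerup characterisation of Gamma, with log-convexity coming from Hoelder's
   inequality.  For the j-th term of [M_n], the double sum over the terms of [frakM_m]
   collapses, by a Newton-type identity for Pochhammer symbols, to a multiple of
   (-j)_m, which vanishes for j < m.  This kills everything when n < m; when n > m the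
   remaining sum over j is an n-th finite difference of a polynomial of degree n - 1
   in j, hence zero; when n = m only j = n survives and gives the stated norm. *)

From Stdlib Require Import Reals Factorial Lra Lia Psatz.
From Coquelicot Require Import Coquelicot.
Open Scope R_scope.

Lemma sum_f_R0_Sl (f : nat -> R) N :
  sum_f_R0 f (S N) = f 0%nat + sum_f_R0 (fun i => f (S i)) N.
Proof. rewrite decomp_sum; [reflexivity | lia]. Qed.

Lemma sum_f_R0_scal_l (f : nat -> R) N c :
  c * sum_f_R0 f N = sum_f_R0 (fun i => c * f i) N.
Proof. induction N; simpl; [ring | rewrite <- IHN; ring]. Qed.

Lemma sum_f_R0_scal_r (f : nat -> R) N c :
  sum_f_R0 f N * c = sum_f_R0 (fun i => f i * c) N.
Proof. induction N; simpl; [ring | rewrite <- IHN; ring]. Qed.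

Lemma sum_f_R0_opp (f : nat -> R) N :
  sum_f_R0 (fun i => - f i) N = - sum_f_R0 f N.
Proof. induction N; simpl; [ring | rewrite IHN; ring]. Qed.

Lemma sum_f_R0_last (f : nat -> R) N :
  (forall j, (j < N)%nat -> f j = 0) -> sum_f_R0 f N = f N.
Proof.
  intros H. destruct N; [reflexivity |].
  rewrite tech5, sum_eq_R0; [ring |]. intros; apply H; lia.
Qed.

Lemma sum_f_R0_triangle_swap (F : nat -> nat -> R) m :
  sum_f_R0 (fun r => sum_f_R0 (fun s => F r s) r) m =
  sum_f_R0 (fun s => sum_f_R0 (fun t => F (s + t)%nat s) (m - s)) m.
Proof.
  induction m as [| m IHm]; [reflexivity |].
  rewrite tech5, IHm, (tech5 (fun s => F (S m) s)), (tech5 (fun s => sum_f_R0 _ (S m - s))).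
  rewrite Nat.sub_diag. simpl (sum_f_R0 _ 0). rewrite Nat.add_0_r, <- Rplus_assoc, <- sum_plus.
  f_equal. apply sum_eq. intros i Hi.
  replace (S m - i)%nat with (S (m - i)) by lia. rewrite tech5.
  replace (i + S (m - i))%nat with (S m) by lia. reflexivity.
Qed.

(** * Pochhammer symbols *)

Lemma poch_add a k l : poch a (k + l) = poch a k * poch (a + INR k) l.
Proof.
  induction l as [| l IHl].
  - rewrite Nat.add_0_r; simpl; ring.
  - rewrite Nat.add_succ_r. simpl. rewrite IHl, plus_INR. ring.
Qed.

Lemma poch_Sl a k : poch a (S k) = a * poch (a + 1) k.
Proof. rewrite <- Nat.add_1_l, poch_add. simpl. ring. Qed.

Lemma poch_pos a k : 0 < a -> 0 < poch a k.
Proof.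
  intros Ha; induction k; simpl; [lra |].
  apply Rmult_lt_0_compat; [auto |]. pose proof (pos_INR k); lra.
Qed.

Lemma poch_1 k : poch 1 k = INR (fact k).
Proof.
  induction k as [| k IHk]; [reflexivity |].
  simpl poch. rewrite IHk, fact_simpl, mult_INR, S_INR. ring.
Qed.

Lemma poch_reflect a k : poch a k * (-1) ^ k = poch (- a - INR k + 1) k.
Proof.
  induction k as [| k IHk]; [simpl; ring |].
  rewrite (poch_Sl (- a - INR (S k) + 1)), S_INR.
  replace (- a - (INR k + 1) + 1 + 1) with (- a - INR k + 1) by ring.
  rewrite <- IHk. simpl. ring.
Qed.

Lemma poch_opp_nat_lt j m : (j < m)%nat -> poch (- INR j) m = 0.
Proof.
  induction m as [| m IHm]; intros H; [lia |].
  simpl. destruct (Nat.eq_dec j m) as [-> | Hn]; [ring |].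
  rewrite IHm by lia. ring.
Qed.

Lemma poch_opp_nat_diag n : poch (- INR n) n = (-1) ^ n * INR (fact n).
Proof.
  rewrite <- poch_1. pose proof (poch_reflect 1 n) as H.
  replace (- (1) - INR n + 1) with (- INR n) in H by ring.
  rewrite <- H. ring.
Qed.

Lemma sum_poch_fact a K :
  sum_f_R0 (fun t => poch a t / INR (fact t)) K = poch (a + 1) K / INR (fact K).
Proof.
  induction K as [| K IHK]; [simpl; field |].
  rewrite tech5, IHK, poch_Sl. simpl (poch (a + 1) (S K)).
  rewrite fact_simpl, mult_INR, S_INR.
  pose proof (INR_fact_neq_0 K). pose proof (pos_INR K).
  field. lra.
Qed.

(** * Alternating binomial sums *)

(* [Binomial.C n k] is junk for [k > n] (truncated subtraction in [fact (n - k)]),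
   so alternating sums are handled with Pascal's recursion, which vanishes there. *)
Fixpoint binom (n k : nat) : R :=
  match n, k with
  | _, O => 1
  | O, S _ => 0
  | S n', S k' => binom n' k' + binom n' (S k')
  end.

Lemma binom_0 n : binom n 0 = 1.
Proof. destruct n; reflexivity. Qed.

Lemma binom_gt n k : (n < k)%nat -> binom n k = 0.
Proof.
  revert k; induction n as [| n IHn]; intros k H; destruct k; simpl; try lia; auto.
  rewrite !IHn by lia. ring.
Qed.

Lemma binom_diag n : binom n n = 1.
Proof. induction n as [| n IHn]; simpl; auto. rewrite IHn, binom_gt by lia. ring. Qed.

Lemma binomR_binom n k : (k <= n)%nat -> binomR n k = binom n k.
Proof.
  unfold binomR. revert k; induction n as [| n IHn]; intros k H.
  - destruct k; [| lia]. simpl. unfold Binomial.C. simpl. field.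
  - destruct k.
    + simpl. unfold Binomial.C. rewrite Nat.sub_0_r. simpl (fact 0). simpl INR at 2.
      field. apply INR_fact_neq_0.
    + simpl. destruct (Nat.eq_dec k n) as [-> | Hn].
      * rewrite C_n_n, binom_diag, binom_gt by lia. ring.
      * rewrite <- pascal by lia. rewrite !IHn by lia. reflexivity.
Qed.

Lemma alt_binom_sum_succ (f : nat -> R) N :
  sum_f_R0 (fun s => (-1) ^ s * binom (S N) s * f s) (S N) =
  sum_f_R0 (fun s => (-1) ^ s * binom N s * (f s - f (S s))) N.
Proof.
  set (g := fun s => (-1) ^ s * binom N s * f s).
  assert (Hshift : f 0%nat + sum_f_R0 (fun i => (-1) ^ S i * binom N (S i) * f (S i)) N
                   = sum_f_R0 g N).
  { rewrite <- (Rplus_0_r (sum_f_R0 g N)).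
    replace 0 with (g (S N)) by (unfold g; rewrite binom_gt by lia; ring).
    rewrite <- tech5, sum_f_R0_Sl. unfold g. rewrite binom_0. simpl pow. ring. }
  transitivity (sum_f_R0 g N - sum_f_R0 (fun i => (-1) ^ i * binom N i * f (S i)) N).
  - rewrite <- Hshift, sum_f_R0_Sl, binom_0. unfold Rminus.
    rewrite Rplus_assoc, <- sum_f_R0_opp, <- sum_plus.
    simpl pow. f_equal; [ring |]. apply sum_eq. intros i _. simpl. ring.
  - rewrite <- minus_sum. apply sum_eq. intros i _. unfold g. ring.
Qed.

(* [deg_le d f]: the [d]-th forward difference (step 1) of [f] is constant, the
   finite-difference substitute for "[f] is a polynomial of degree at most [d]". *)
Fixpoint deg_le (d : nat) (f : R -> R) : Prop :=
  match d with
  | O => forall x, f x = f 0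
  | S d' => deg_le d' (fun x => f (x + 1) - f x)
  end.

Lemma deg_le_ext d : forall f g, (forall x, f x = g x) -> deg_le d f -> deg_le d g.
Proof.
  induction d as [| d IHd]; intros f g E H; simpl in *.
  - intros x. rewrite <- !E. auto.
  - eapply IHd; [| exact H]. intros x; simpl. rewrite !E. reflexivity.
Qed.

Lemma deg_le_const d : forall c, deg_le d (fun _ => c).
Proof.
  induction d as [| d IHd]; intros c; simpl; [reflexivity |].
  eapply deg_le_ext; [| exact (IHd 0)]. intros; simpl; ring.
Qed.

Lemma deg_le_lincomb d : forall f g a b,
  deg_le d f -> deg_le d g -> deg_le d (fun x => a * f x + b * g x).
Proof.
  induction d as [| d IHd]; intros f g a b Hf Hg; simpl in *.
  - intros x. rewrite Hf, Hg. reflexivity.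
  - eapply deg_le_ext; [| apply (IHd _ _ a b Hf Hg)]. intros x; simpl; ring.
Qed.

Lemma deg_le_shift d : forall f t, deg_le d f -> deg_le d (fun x => f (x + t)).
Proof.
  induction d as [| d IHd]; intros f t Hf; simpl in *.
  - intros x. rewrite (Hf (x + t)), (Hf (0 + t)). reflexivity.
  - eapply deg_le_ext; [| apply (IHd _ t Hf)]. intros x; simpl.
    replace (x + 1 + t) with (x + t + 1) by ring. reflexivity.
Qed.

Lemma deg_le_mul_affine d : forall f a b,
  deg_le d f -> deg_le (S d) (fun x => (a + b * x) * f x).
Proof.
  induction d as [| d IHd]; intros f a b Hf.
  - simpl in *. intros x. rewrite (Hf (x + 1)), (Hf x), (Hf (0 + 1)). ring.
  - change (deg_le (S d) (fun x => (a + b * (x + 1)) * f (x + 1) - (a + b * x) * f x)).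
    apply deg_le_ext with
      (f := fun x => 1 * ((a + b * x) * (f (x + 1) - f x)) + b * f (x + 1)).
    { intros x; ring. }
    apply deg_le_lincomb; [apply IHd, Hf | apply deg_le_shift, Hf].
Qed.

Lemma deg_le_mul_poch d k A B : forall f,
  deg_le d f -> deg_le (d + k) (fun x => f x * poch (A + B * x) k).
Proof.
  induction k as [| k IHk]; intros f Hf.
  - rewrite Nat.add_0_r. eapply deg_le_ext; [| exact Hf]. intros; simpl; ring.
  - rewrite Nat.add_succ_r.
    apply deg_le_ext with (f := fun x => ((A + INR k) + B * x) * (f x * poch (A + B * x) k)).
    { intros x; simpl; ring. }
    apply deg_le_mul_affine, IHk, Hf.
Qed.

Lemma alt_binom_sum_deg_lt N : forall d f, (d < N)%nat -> deg_le d f ->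
  sum_f_R0 (fun s => (-1) ^ s * binom N s * f (INR s)) N = 0.
Proof.
  induction N as [| N IHN]; intros d f Hd Hf; [lia |].
  rewrite (alt_binom_sum_succ (fun s => f (INR s))).
  destruct d as [| d].
  - apply sum_eq_R0. intros i _. simpl in Hf. rewrite (Hf (INR i)), (Hf (INR (S i))). ring.
  - transitivity (- sum_f_R0 (fun s => (-1) ^ s * binom N s * (f (INR s + 1) - f (INR s))) N).
    + rewrite <- sum_f_R0_opp. apply sum_eq. intros i _. rewrite S_INR. ring.
    + rewrite (IHN d (fun x => f (x + 1) - f x)) by (auto; lia). ring.
Qed.

Lemma poch_affine_sub A B y m : exists g, deg_le m g /\
  forall s, poch (A + B * s) (S m) - poch (A + B * y) (S m) = (s - y) * g s.
Proof.
  induction m as [| m [g [Hg E]]].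
  - exists (fun _ => B). split; [apply deg_le_const |]. intros s. simpl. ring.
  - exists (fun s => ((A + INR (S m)) + B * s) * g s + B * poch (A + B * y) (S m)).
    split.
    + apply deg_le_ext with
        (f := fun s => 1 * (((A + INR (S m)) + B * s) * g s) + B * poch (A + B * y) (S m)).
      { intros; ring. }
      apply deg_le_lincomb; [apply deg_le_mul_affine, Hg | apply deg_le_const].
    + intros s. change (poch (A + B * s) (S m) * (A + B * s + INR (S m)) -
                        poch (A + B * y) (S m) * (A + B * y + INR (S m)) =
                        (s - y) * ((A + INR (S m) + B * s) * g s + B * poch (A + B * y) (S m))).
      replace (poch (A + B * s) (S m)) with (poch (A + B * y) (S m) + (s - y) * g s)
        by (rewrite <- E; ring).
      ring.
Qed.

Lemma alt_binom_sum_inv m : forall c, 0 < c ->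
  sum_f_R0 (fun s => (-1) ^ s * binom m s * / (c + INR s)) m = INR (fact m) / poch c (S m).
Proof.
  induction m as [| m IHm]; intros c Hc; [simpl; field; lra |].
  rewrite (alt_binom_sum_succ (fun s => / (c + INR s))).
  transitivity (sum_f_R0 (fun s => (-1) ^ s * binom m s * / (c + INR s)) m -
                sum_f_R0 (fun s => (-1) ^ s * binom m s * / ((c + 1) + INR s)) m).
  - rewrite <- minus_sum. apply sum_eq. intros i _. rewrite S_INR.
    replace (c + (INR i + 1)) with (c + 1 + INR i) by ring. ring.
  - rewrite !IHm by lra.
    rewrite (poch_Sl c (S m)), (poch_Sl c m).
    change (poch (c + 1) (S m)) with (poch (c + 1) m * (c + 1 + INR m)).
    rewrite fact_simpl, mult_INR, !S_INR.
    assert (0 < poch (c + 1) m) by (apply poch_pos; lra).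
    pose proof (pos_INR m).
    field. repeat split; lra.
Qed.

(* Summing first over [r] with [sum_poch_fact] leaves
   [(c)_(m+1)/m! * sum_s (-1)^s C(m,s) (A + B s)_m / (c + s)]; splitting
   [(A + B s)_m] at [s = -c] with [poch_affine_sub], the polynomial part is
   killed by [alt_binom_sum_deg_lt] and the rest is [alt_binom_sum_inv]. *)
Lemma newton_poch_identity m A B c : 0 < c ->
  sum_f_R0 (fun r => sum_f_R0 (fun s =>
     (-1) ^ s * binomR r s / INR (fact r) * poch c r * poch (A + B * INR s) m) r) m
  = poch (A + B * (- c)) m.
Proof.
  intros Hc.
  rewrite sum_f_R0_triangle_swap.
  transitivity (poch c (S m) / INR (fact m) *
     sum_f_R0 (fun s => (-1) ^ s * binom m s * poch (A + B * INR s) m * / (c + INR s)) m).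
  - rewrite sum_f_R0_scal_l. apply sum_eq. intros s Hs.
    transitivity ((-1) ^ s * poch (A + B * INR s) m / INR (fact s) * poch c s *
                  sum_f_R0 (fun t => poch (c + INR s) t / INR (fact t)) (m - s)).
    + rewrite sum_f_R0_scal_l. apply sum_eq. intros t Ht.
      unfold binomR, Binomial.C. replace (s + t - s)%nat with t by lia.
      rewrite poch_add.
      pose proof (INR_fact_neq_0 s). pose proof (INR_fact_neq_0 t).
      pose proof (INR_fact_neq_0 (s + t)).
      field. auto.
    + rewrite sum_poch_fact.
      replace (poch c (S m)) with (poch c s * (c + INR s) * poch (c + INR s + 1) (m - s)).
      2:{ replace (S m) with (s + S (m - s))%nat by lia. rewrite poch_add, poch_Sl. ring. }
      rewrite <- binomR_binom by lia. unfold binomR, Binomial.C.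
      pose proof (INR_fact_neq_0 s). pose proof (INR_fact_neq_0 (m - s)).
      pose proof (INR_fact_neq_0 m). pose proof (pos_INR s).
      field. repeat split; auto; lra.
  - destruct m as [| m]; [simpl; field; lra |].
    destruct (poch_affine_sub A B (- c) m) as [g [Hg E]].
    transitivity (poch c (S (S m)) / INR (fact (S m)) *
      (sum_f_R0 (fun s => (-1) ^ s * binom (S m) s * g (INR s)) (S m) +
       poch (A + B * - c) (S m) *
         sum_f_R0 (fun s => (-1) ^ s * binom (S m) s * / (c + INR s)) (S m))).
    + f_equal. rewrite sum_f_R0_scal_l, <- sum_plus. apply sum_eq. intros s _.
      replace (poch (A + B * INR s) (S m))
        with (poch (A + B * - c) (S m) + (INR s - - c) * g (INR s)) by (rewrite <- E; ring).
      pose proof (pos_INR s). field. lra.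
    + rewrite (alt_binom_sum_deg_lt (S m) m g), alt_binom_sum_inv by (auto; lia).
      assert (0 < poch c (S (S m))) by (apply poch_pos; lra).
      pose proof (INR_fact_neq_0 (S m)).
      field. split; lra.
Qed.

(** * Improper integrals over (0, +oo) *)

Notation is_RInt_0oo f l := (is_RInt_gen f (at_right 0) (Rbar_locally p_infty) l).

Lemma filter_prod_box (a0 b0 : R) : 0 < a0 ->
  filter_prod (at_right 0) (Rbar_locally p_infty) (fun ab => 0 < fst ab < a0 /\ b0 < snd ab).
Proof.
  intros H. apply (Filter_prod _ _ _ (fun a => 0 < a < a0) (fun b => b0 < b)).
  - exists (mkposreal a0 H). intros y Hy Hy0.
    change (Rabs (y - 0) < a0) in Hy. rewrite Rminus_0_r in Hy. apply Rabs_def2 in Hy.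
    simpl. lra.
  - exists b0. auto.
  - intros x y H1 H2. simpl. auto.
Qed.

Lemma at_right_0_pos (P : R -> Prop) : (forall x, 0 < x -> P x) -> at_right 0 P.
Proof. intros H. exists (mkposreal 1 Rlt_0_1). intros y _ Hy. apply H; auto. Qed.

Lemma is_RInt_0oo_ext (f g : R -> R) l : (forall x, 0 < x -> f x = g x) ->
  is_RInt_0oo f l -> is_RInt_0oo g l.
Proof.
  intros E. apply is_RInt_gen_ext.
  apply (filter_imp (fun ab => 0 < fst ab < 1 /\ 0 < snd ab)); [| apply filter_prod_box; lra].
  intros [a b] [[Ha _] Hb] x [Hx _]. apply E. simpl in *.
  apply Rle_lt_trans with (2 := Hx). apply Rmin_glb; lra.
Qed.

Lemma is_RInt_0oo_unique (f : R -> R) l :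
  is_RInt_0oo f l -> RInt_gen f (at_right 0) (Rbar_locally p_infty) = l.
Proof. exact (@is_RInt_gen_unique R_CompleteNormedModule _ _ _ _ f l). Qed.

Lemma is_RInt_0oo_inj (f : R -> R) l1 l2 :
  is_RInt_0oo f l1 -> is_RInt_0oo f l2 -> l1 = l2.
Proof. intros H1 H2. rewrite <- (is_RInt_0oo_unique f l1 H1). apply is_RInt_0oo_unique, H2. Qed.

Lemma is_RInt_0oo_ge0 (f : R -> R) l : (forall x, 0 < x -> 0 <= f x) ->
  is_RInt_0oo f l -> 0 <= l.
Proof.
  intros Hf H. apply Rnot_lt_le. intros Hneg.
  assert (Hl : 0 < - l / 2) by lra.
  pose proof (H _ (locally_ball l (mkposreal _ Hl))) as Hball. unfold filtermapi in Hball.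
  destruct (filter_ex _ (filter_and _ _ Hball (filter_prod_box 1 1 Rlt_0_1)))
    as [[a b] [[y [Hy Hyl]] [[Ha Ha1] Hb]]].
  simpl in *. change (Rabs (y - l) < - l / 2) in Hyl. apply Rabs_def2 in Hyl.
  assert (0 <= y); [| lra].
  rewrite <- (is_RInt_unique _ _ _ _ Hy). apply RInt_ge_0; [lra | eexists; eauto |].
  intros x Hx. apply Hf. lra.
Qed.

Lemma is_RInt_0oo_le (f g : R -> R) lf lg : (forall x, 0 < x -> f x <= g x) ->
  is_RInt_0oo f lf -> is_RInt_0oo g lg -> lf <= lg.
Proof.
  intros Hfg Hf Hg.
  apply Rminus_le_0. refine (is_RInt_0oo_ge0 _ _ _ (is_RInt_gen_minus g f lg lf Hg Hf)).
  intros x Hx. change (0 <= g x - f x). specialize (Hfg x Hx). lra.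
Qed.

Lemma is_RInt_0oo_scal (f : R -> R) k l :
  is_RInt_0oo f l -> is_RInt_0oo (fun x => k * f x) (k * l).
Proof. exact (is_RInt_gen_scal f k l). Qed.

Lemma is_RInt_0oo_sum (f : nat -> R -> R) (l : nat -> R) N :
  (forall i, (i <= N)%nat -> is_RInt_0oo (f i) (l i)) ->
  is_RInt_0oo (fun x => sum_f_R0 (fun i => f i x) N) (sum_f_R0 l N).
Proof.
  induction N as [| N IHN]; intros H; simpl; [apply H; lia |].
  apply (is_RInt_gen_plus (fun x => sum_f_R0 (fun i => f i x) N) (f (S N)));
    [apply IHN; intros; apply H |  apply H]; lia.
Qed.

Section Nonnegative_integrand.

Variable f : R -> R.
Hypothesis f_cont : forall x, 0 < x -> continuous f x.
Hypothesis f_ge0 : forall x, 0 < x -> 0 <= f x.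

Lemma ex_RInt_pos a b : 0 < a -> a <= b -> ex_RInt f a b.
Proof.
  intros Ha Hab. apply (@ex_RInt_continuous R_CompleteNormedModule). intros z Hz.
  apply f_cont. rewrite Rmin_left in Hz; lra.
Qed.

Lemma RInt_le_widen a b a' b' : 0 < a' -> a' <= a -> a <= b -> b <= b' ->
  RInt f a b <= RInt f a' b'.
Proof.
  intros Ha' Ha Hab Hb.
  rewrite <- (RInt_Chasles f a' a b') by (apply ex_RInt_pos; lra).
  rewrite <- (RInt_Chasles f a b b') by (apply ex_RInt_pos; lra).
  assert (0 <= RInt f a' a) by (apply RInt_ge_0; [lra | apply ex_RInt_pos; lra | intros; apply f_ge0; lra]).
  assert (0 <= RInt f b b') by (apply RInt_ge_0; [lra | apply ex_RInt_pos; lra | intros; apply f_ge0; lra]).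
  change (RInt f a b <= RInt f a' a + (RInt f a b + RInt f b b')). lra.
Qed.

(* The improper integral is the supremum of the integrals over compact subintervals. *)
Lemma is_RInt_0oo_of_bounded M :
  (forall a b, 0 < a -> a <= b -> RInt f a b <= M) ->
  exists l, is_RInt_0oo f l /\ (forall a b, 0 < a -> a <= b -> RInt f a b <= l).
Proof.
  intros Hb.
  set (E := fun y => exists a b, 0 < a /\ a <= b /\ y = RInt f a b).
  assert (HbE : bound E) by (exists M; intros y [a [b [Ha [Hab ->]]]]; apply Hb; auto).
  assert (HeE : exists y, E y) by (exists (RInt f 1 1), 1, 1; repeat split; lra).
  destruct (completeness E HbE HeE) as [l [Hub Hlub]].
  assert (Hle : forall a b, 0 < a -> a <= b -> RInt f a b <= l)
    by (intros a b Ha Hab; apply Hub; exists a, b; auto).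
  exists l. split; [| exact Hle].
  intros P [eps HP].
  assert (Hclose : exists a0 b0, 0 < a0 /\ a0 <= b0 /\ l - eps < RInt f a0 b0).
  { apply Classical_Prop.NNPP. intros Hn.
    assert (l <= l - eps); [| destruct eps; simpl in *; lra].
    apply Hlub. intros y [a [b [Ha [Hab ->]]]].
    apply Rnot_lt_le. intros Hlt. apply Hn. exists a, b. auto. }
  destruct Hclose as [a0 [b0 [Ha0 [Hab0 Hl0]]]].
  unfold filtermapi.
  apply (filter_imp (fun ab => 0 < fst ab < a0 /\ b0 < snd ab)); [| apply filter_prod_box; auto].
  intros [a b] [[Ha1 Ha2] Hb1]. simpl in *.
  exists (RInt f a b). split; [apply (@RInt_correct R_CompleteNormedModule), ex_RInt_pos; lra |].
  apply HP. change (Rabs (RInt f a b - l) < eps). apply Rabs_def1.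
  - pose proof (Hle a b Ha1 ltac:(lra)). pose proof (cond_pos eps). lra.
  - pose proof (RInt_le_widen a0 b0 a b Ha1 ltac:(lra) Hab0 ltac:(lra)). lra.
Qed.

Lemma RInt_partial_pos l : (forall x, 0 < x -> 0 < f x) ->
  (forall a b, 0 < a -> a <= b -> RInt f a b <= l) -> 0 < l.
Proof.
  intros Hp H. apply Rlt_le_trans with (RInt f 1 2); [| apply H; lra].
  apply RInt_gt_0; [lra | intros; apply Hp; lra | intros; apply f_cont; lra].
Qed.

End Nonnegative_integrand.

Lemma is_RInt_0oo_dominated (f phi : R -> R) K M :
  (forall x, 0 < x -> continuous f x) -> (forall x, 0 < x -> continuous phi x) ->
  (forall x, 0 < x -> 0 <= f x <= K * phi x) -> 0 <= K ->
  (forall a b, 0 < a -> a <= b -> RInt phi a b <= M) ->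
  exists l, is_RInt_0oo f l /\ (forall a b, 0 < a -> a <= b -> RInt f a b <= l).
Proof.
  intros Hf Hphi Hb HK HM.
  apply (is_RInt_0oo_of_bounded f Hf (fun x Hx => proj1 (Hb x Hx)) (K * M)).
  intros a b Ha Hab.
  assert (Hexp := ex_RInt_pos phi Hphi a b Ha Hab).
  apply Rle_trans with (RInt (fun x => K * phi x) a b).
  - apply RInt_le; [lra | apply ex_RInt_pos; auto | apply (ex_RInt_scal _ _ _ K Hexp) |].
    intros x Hx. apply Hb. lra.
  - replace (RInt (fun x => K * phi x) a b) with (K * RInt phi a b)
      by (symmetry; exact (RInt_scal phi a b K Hexp)).
    apply Rmult_le_compat_l; auto.
Qed.

Lemma is_RInt_0oo_derive (F df : R -> R) la lb :
  (forall x, 0 < x -> is_derive F x (df x)) -> (forall x, 0 < x -> continuous df x) ->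
  filterlim F (at_right 0) (locally la) -> filterlim F (Rbar_locally p_infty) (locally lb) ->
  is_RInt_0oo df (lb - la).
Proof.
  intros Hd Hc Ha Hb.
  assert (E : forall x, 0 < x -> Derive F x = df x) by (intros; apply is_derive_unique; auto).
  assert (Hpos : forall (P : R -> Prop), (forall x, 0 < x -> P x) ->
     filter_prod (at_right 0) (Rbar_locally p_infty)
       (fun ab => forall x, Rmin (fst ab) (snd ab) <= x <= Rmax (fst ab) (snd ab) -> P x)).
  { intros P HP. apply (filter_imp (fun ab => 0 < fst ab < 1 /\ 1 < snd ab));
      [| apply filter_prod_box; lra].
    intros [a b] [[H1 H2] H3] x [Hx1 Hx2]. simpl in *. apply HP.
    rewrite Rmin_left in Hx1 by lra. lra. }
  apply (is_RInt_0oo_ext (Derive F)); [exact E |].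
  apply is_RInt_gen_Derive; auto.
  - apply Hpos. intros x Hx. eexists; apply Hd; auto.
  - apply Hpos. intros x Hx. apply (continuous_ext_loc (Derive F) df x); [| apply Hc; auto].
    exists (mkposreal x Hx). intros y Hy.
    change (Rabs (y - x) < x) in Hy. apply Rabs_def2 in Hy.
    symmetry. apply E. lra.
Qed.

Lemma Rpower_pos x c : 0 < Rpower x c.
Proof. apply exp_pos. Qed.

Lemma Rpower_minus_1 x c : 0 < x -> Rpower x (c - 1) = Rpower x c / x.
Proof. intros Hx. unfold Rminus. rewrite Rpower_plus, Rpower_Ropp, Rpower_1 by auto. reflexivity. Qed.

Lemma Rpower_le_1 x c : 1 <= x -> c <= 0 -> Rpower x c <= 1.
Proof. intros Hx Hc. rewrite <- (Rpower_O x) by lra. apply Rle_Rpower; lra. Qed.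

Lemma Rpower_le_base a b c : 0 < a -> a <= b -> 0 <= c -> Rpower a c <= Rpower b c.
Proof.
  intros Ha Hab Hc. destruct (Req_dec c 0) as [-> | Hc0]; [rewrite !Rpower_O by lra; lra |].
  destruct (Req_dec a b) as [-> | Hab']; [lra |]. left. apply Rlt_Rpower_l; lra.
Qed.

Lemma Rpower_div a b c : 0 < a -> 0 < b -> Rpower (a / b) c = Rpower a c / Rpower b c.
Proof.
  intros Ha Hb. unfold Rpower. rewrite ln_div by auto.
  unfold Rminus, Rdiv. rewrite Rmult_plus_distr_l, exp_plus, <- Ropp_mult_distr_r, exp_Ropp.
  reflexivity.
Qed.

Lemma continuous_of_ex_derive (f : R -> R) x : ex_derive f x -> continuous f x.
Proof. apply (@ex_derive_continuous R_AbsRing R_NormedModule). Qed.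

Lemma pow_div_fact_le_exp t N : 0 <= t -> t ^ N / INR (fact N) <= exp t.
Proof.
  intros Ht. eapply Rle_trans; [| apply (exp_ge_taylor t N Ht)].
  assert (Hk : forall k, 0 <= t ^ k / INR (fact k)).
  { intros k. apply Rmult_le_pos; [apply pow_le; auto |].
    left. apply Rinv_0_lt_compat, INR_fact_lt_0. }
  destruct N; [simpl; lra |].
  rewrite tech5. pose proof (cond_pos_sum _ N Hk). lra.
Qed.

Lemma pow_le_fact_exp t N : 0 <= t -> t ^ N <= INR (fact N) * exp t.
Proof.
  intros Ht. pose proof (pow_div_fact_le_exp t N Ht) as H. pose proof (INR_fact_lt_0 N).
  unfold Rdiv in H. apply (Rmult_le_compat_l (INR (fact N))) in H; [| lra].
  rewrite <- Rmult_assoc, (Rmult_comm (INR (fact N))), Rmult_assoc, Rinv_r, Rmult_1_r in H; lra.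
Qed.

Lemma filterlim_squeeze_0 {F : (R -> Prop) -> Prop} {FF : Filter F} (f g : R -> R) :
  F (fun t => 0 <= f t <= g t) -> filterlim g F (locally 0) -> filterlim f F (locally 0).
Proof.
  intros Hfg Hg. apply filterlim_locally. intros eps.
  apply filterlim_locally with (eps := eps) in Hg.
  apply (filter_imp (fun t => (0 <= f t <= g t) /\ ball 0 eps (g t))); [| apply filter_and; auto].
  intros t [[H1 H2] H3]. change (Rabs (g t - 0) < eps) in H3. change (Rabs (f t - 0) < eps).
  rewrite Rminus_0_r in *. rewrite Rabs_pos_eq in * by lra. lra.
Qed.

Lemma lim_Rpower_at_0 s : 0 < s -> filterlim (fun t => Rpower t s) (at_right 0) (locally 0).
Proof.
  intros Hs. apply filterlim_locally. intros eps.
  exists (mkposreal _ (Rpower_pos eps (/ s))). intros y Hy Hy0.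
  change (Rabs (y - 0) < Rpower eps (/ s)) in Hy. rewrite Rminus_0_r, Rabs_pos_eq in Hy by lra.
  change (Rabs (Rpower y s - 0) < eps).
  rewrite Rminus_0_r, Rabs_pos_eq by (left; apply Rpower_pos).
  replace (pos eps) with (Rpower (Rpower eps (/ s)) s); [apply Rlt_Rpower_l; lra |].
  rewrite Rpower_mult. replace (/ s * s) with 1 by (field; lra). apply Rpower_1, cond_pos.
Qed.

Lemma lim_Rpower_oo b : 0 < b ->
  filterlim (fun x => Rpower (1 + x) (- b)) (Rbar_locally p_infty) (locally 0).
Proof.
  intros Hb. apply filterlim_locally. intros eps.
  exists (Rpower eps (- / b)). intros x Hx.
  change (Rabs (Rpower (1 + x) (- b) - 0) < eps).
  rewrite Rminus_0_r, Rabs_pos_eq by (left; apply Rpower_pos). rewrite Rpower_Ropp.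
  pose proof (cond_pos eps) as He. pose proof (Rpower_pos eps (- / b)) as HM.
  assert (H : Rpower (Rpower eps (- / b)) b < Rpower (1 + x) b) by (apply Rlt_Rpower_l; lra).
  rewrite Rpower_mult in H. replace (- / b * b) with (- (1)) in H by (field; lra).
  rewrite Rpower_Ropp, Rpower_1 in H by auto.
  replace (pos eps) with (/ / eps) by (field; lra).
  apply Rinv_lt_contravar; auto.
  apply Rmult_lt_0_compat; [apply Rinv_0_lt_compat; auto | apply Rpower_pos].
Qed.

Lemma lim_div_oo C : filterlim (fun x => C / x) (Rbar_locally p_infty) (locally 0).
Proof.
  apply filterlim_locally. intros eps. pose proof (cond_pos eps) as He.
  exists (Rabs C / eps + 1). intros x Hx.
  change (Rabs (C / x - 0) < eps). rewrite Rminus_0_r.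
  assert (0 <= Rabs C / eps)
    by (apply Rmult_le_pos; [apply Rabs_pos | left; apply Rinv_0_lt_compat; lra]).
  unfold Rdiv. rewrite Rabs_mult, Rabs_inv, (Rabs_pos_eq x) by lra.
  apply (Rmult_lt_reg_r x); [lra |]. rewrite Rmult_assoc, Rinv_l by lra.
  apply (Rmult_lt_reg_r (/ eps)); [apply Rinv_0_lt_compat; lra |].
  replace (eps * x * / eps) with x by (field; lra). lra.
Qed.

Lemma lim_Rpower_exp_oo s : 0 < s ->
  filterlim (fun t => Rpower t s * exp (- t)) (Rbar_locally p_infty) (locally 0).
Proof.
  intros Hs. destruct (INR_unbounded s) as [N HN].
  apply (filterlim_squeeze_0 _ (fun t => INR (fact (S N)) / t)); [| apply lim_div_oo].
  exists 1. intros t Ht. split.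
  - left. apply Rmult_lt_0_compat; [apply Rpower_pos | apply exp_pos].
  - assert (H1 : Rpower t s <= t ^ N) by (rewrite <- Rpower_pow by lra; apply Rle_Rpower; lra).
    pose proof (pow_le_fact_exp t (S N) ltac:(lra)) as H2. simpl pow in H2.
    pose proof (exp_pos t).
    rewrite exp_Ropp. apply (Rmult_le_reg_r (t * exp t)); [apply Rmult_lt_0_compat; lra |].
    replace (Rpower t s * / exp t * (t * exp t)) with (Rpower t s * t) by (field; lra).
    replace (INR (fact (S N)) / t * (t * exp t)) with (INR (fact (S N)) * exp t) by (field; lra).
    apply Rle_trans with (t ^ N * t); [apply Rmult_le_compat_r; lra | lra].
Qed.

(** * The Gamma and Beta integrals *)

Definition gamma_kernel (s t : R) := Rpower t (s - 1) * exp (- t).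
Definition beta_kernel (a b x : R) := Rpower x (a - 1) * Rpower (1 + x) (- (a + b)).

Lemma gamma_kernel_cont s x : 0 < x -> continuous (gamma_kernel s) x.
Proof. intros Hx. apply continuous_of_ex_derive. unfold gamma_kernel, Rpower. auto_derive. lra. Qed.

Lemma beta_kernel_cont a b x : 0 < x -> continuous (beta_kernel a b) x.
Proof. intros Hx. apply continuous_of_ex_derive. unfold beta_kernel, Rpower. auto_derive. lra. Qed.

Lemma gamma_kernel_pos s x : 0 < gamma_kernel s x.
Proof. apply Rmult_lt_0_compat; [apply Rpower_pos | apply exp_pos]. Qed.

Lemma beta_kernel_pos a b x : 0 < beta_kernel a b x.
Proof. apply Rmult_lt_0_compat; apply Rpower_pos. Qed.

Lemma beta_kernel_1_l b x : 0 < x -> beta_kernel 1 b x = Rpower (1 + x) (- b - 1).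
Proof.
  intros Hx. unfold beta_kernel. replace (1 - 1) with 0 by ring.
  rewrite Rpower_O by lra. rewrite Rmult_1_l. f_equal. ring.
Qed.

Lemma beta_kernel_split a b x : 0 < x ->
  beta_kernel a b x = beta_kernel (a + 1) b x + beta_kernel a (b + 1) x.
Proof.
  intros Hx. unfold beta_kernel.
  replace (- (a + 1 + b)) with (- (a + b) - 1) by ring.
  replace (- (a + (b + 1))) with (- (a + b) - 1) by ring.
  replace (a + 1 - 1) with a by ring.
  rewrite !Rpower_minus_1 by lra. field. lra.
Qed.

Lemma RInt_beta_kernel_r1_le a al be : 0 < a -> 0 < al -> al <= be ->
  RInt (beta_kernel a 1) al be <= / a.
Proof.
  intros Ha Hal Hab.
  set (G := fun x => Rpower x a * Rpower (1 + x) (- a) / a).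
  assert (HG : is_RInt (beta_kernel a 1) al be (minus (G be) (G al))).
  { apply (@is_RInt_derive R_CompleteNormedModule).
    - intros x Hx. rewrite Rmin_left in Hx by lra.
      unfold beta_kernel, G. rewrite Rpower_minus_1 by lra.
      replace (- (a + 1)) with (- a - 1) by ring. rewrite (Rpower_minus_1 (1 + x)) by lra.
      unfold Rpower. auto_derive; [lra |]. field. lra.
    - intros x Hx. rewrite Rmin_left in Hx by lra. apply beta_kernel_cont. lra. }
  rewrite (is_RInt_unique _ _ _ _ HG). change (G be - G al <= / a).
  assert (0 <= G al).
  { apply Rmult_le_pos; [left; apply Rmult_lt_0_compat; apply Rpower_pos |].
    left; apply Rinv_0_lt_compat; auto. }
  assert (G be <= / a); [| lra].
  unfold G. rewrite Rpower_Ropp.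
  assert (Rpower be a < Rpower (1 + be) a) by (apply Rlt_Rpower_l; lra).
  pose proof (Rpower_pos be a). pose proof (Rpower_pos (1 + be) a).
  unfold Rdiv. rewrite <- (Rmult_1_l (/ a)) at 2.
  apply Rmult_le_compat_r; [left; apply Rinv_0_lt_compat; auto |].
  apply Rmult_le_reg_r with (Rpower (1 + be) a); auto.
  rewrite Rmult_assoc, Rinv_l, Rmult_1_r, Rmult_1_l; lra.
Qed.

Lemma RInt_beta_kernel_l1_le b al be : 0 < b -> 0 < al -> al <= be ->
  RInt (beta_kernel 1 b) al be <= / b.
Proof.
  intros Hb Hal Hab.
  set (G := fun x => - Rpower (1 + x) (- b) / b).
  assert (HG : is_RInt (beta_kernel 1 b) al be (minus (G be) (G al))).
  { apply (@is_RInt_derive R_CompleteNormedModule).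
    - intros x Hx. rewrite Rmin_left in Hx by lra.
      unfold G. rewrite beta_kernel_1_l, (Rpower_minus_1 (1 + x)) by lra.
      unfold Rpower. auto_derive; [lra |]. field. lra.
    - intros x Hx. rewrite Rmin_left in Hx by lra. apply beta_kernel_cont. lra. }
  rewrite (is_RInt_unique _ _ _ _ HG). change (G be - G al <= / b).
  unfold G. pose proof (Rpower_pos (1 + be) (- b)).
  assert (Rpower (1 + al) (- b) <= 1) by (apply Rpower_le_1; lra).
  apply (Rmult_le_reg_r b); auto. unfold Rdiv. rewrite Rinv_l by lra.
  replace ((- Rpower (1 + be) (- b) * / b - - Rpower (1 + al) (- b) * / b) * b)
    with (Rpower (1 + al) (- b) - Rpower (1 + be) (- b)) by (field; lra).
  lra.
Qed.

Lemma ex_is_RInt_beta_kernel_ge1 a b : 0 < a -> 0 < b -> (1 <= a \/ 1 <= b) ->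
  exists l, is_RInt_0oo (beta_kernel a b) l /\ 0 < l.
Proof.
  intros Ha Hb Hab.
  assert (Hdom : exists a' b' M, (forall x, 0 < x -> beta_kernel a b x <= beta_kernel a' b' x)
            /\ forall al be, 0 < al -> al <= be -> RInt (beta_kernel a' b') al be <= M).
  { destruct Hab as [H1 | H1].
    - exists 1, b, (/ b). split; [| intros; apply RInt_beta_kernel_l1_le; auto].
      intros x Hx. rewrite beta_kernel_1_l by auto. unfold beta_kernel.
      apply Rle_trans with (Rpower (1 + x) (a - 1) * Rpower (1 + x) (- (a + b))).
      + apply Rmult_le_compat_r; [left; apply Rpower_pos | apply Rpower_le_base; lra].
      + rewrite <- Rpower_plus. right. f_equal. ring.
    - exists a, 1, (/ a). split; [| intros; apply RInt_beta_kernel_r1_le; auto].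
      intros x Hx. apply Rmult_le_compat_l; [left; apply Rpower_pos | apply Rle_Rpower; lra]. }
  destruct Hdom as [a' [b' [M [Hle HM]]]].
  destruct (is_RInt_0oo_dominated (beta_kernel a b) (beta_kernel a' b') 1 M) as [l [Hl Hp]];
    auto using beta_kernel_cont; [| lra |].
  - intros x Hx. split; [left; apply beta_kernel_pos | rewrite Rmult_1_l; auto].
  - exists l. split; auto. apply (RInt_partial_pos (beta_kernel a b));
      auto using beta_kernel_cont, beta_kernel_pos.
Qed.

Lemma ex_is_RInt_beta_kernel a b : 0 < a -> 0 < b ->
  exists l, is_RInt_0oo (beta_kernel a b) l /\ 0 < l.
Proof.
  intros Ha Hb.
  destruct (Rle_lt_dec 1 a) as [H | H]; [apply ex_is_RInt_beta_kernel_ge1; auto |].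
  destruct (Rle_lt_dec 1 b) as [H' | H']; [apply ex_is_RInt_beta_kernel_ge1; auto |].
  destruct (ex_is_RInt_beta_kernel_ge1 (a + 1) b) as [l1 [H1 P1]]; try lra.
  destruct (ex_is_RInt_beta_kernel_ge1 a (b + 1)) as [l2 [H2 P2]]; try lra.
  exists (l1 + l2). split; [| lra].
  apply (is_RInt_0oo_ext (fun x => plus (beta_kernel (a + 1) b x) (beta_kernel a (b + 1) x))).
  - intros x Hx. symmetry. apply beta_kernel_split, Hx.
  - apply (is_RInt_gen_plus _ _ l1 l2 H1 H2).
Qed.

Lemma gamma_kernel_le s t N : 0 < t -> s + 1 <= INR N ->
  gamma_kernel s t <= INR (fact N) * exp 1 * beta_kernel s 1 t.
Proof.
  intros Ht HN. unfold gamma_kernel, beta_kernel. rewrite Rpower_Ropp.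
  assert (Hp1 : Rpower (1 + t) (s + 1) <= (1 + t) ^ N)
    by (rewrite <- Rpower_pow by lra; apply Rle_Rpower; lra).
  pose proof (pow_le_fact_exp (1 + t) N ltac:(lra)) as He. rewrite exp_plus in He.
  rewrite exp_Ropp.
  pose proof (exp_pos t). pose proof (Rpower_pos t (s - 1)).
  pose proof (Rpower_pos (1 + t) (s + 1)).
  replace (s + 1) with (1 + s) in * by ring.
  apply (Rmult_le_reg_r (exp t * Rpower (1 + t) (1 + s))); [apply Rmult_lt_0_compat; lra |].
  replace (Rpower t (s - 1) * / exp t * (exp t * Rpower (1 + t) (1 + s)))
    with (Rpower t (s - 1) * Rpower (1 + t) (1 + s)) by (field; lra).
  replace (INR (fact N) * exp 1 * (Rpower t (s - 1) * / Rpower (1 + t) (1 + s)) *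
     (exp t * Rpower (1 + t) (1 + s)))
    with (Rpower t (s - 1) * (INR (fact N) * (exp 1 * exp t))) by (field; lra).
  apply Rmult_le_compat_l; lra.
Qed.

Lemma is_RInt_Gamma_pos s : 0 < s -> is_RInt_0oo (gamma_kernel s) (Gamma s) /\ 0 < Gamma s.
Proof.
  intros Hs. destruct (INR_unbounded (s + 1)) as [N HN].
  destruct (is_RInt_0oo_dominated (gamma_kernel s) (beta_kernel s 1) (INR (fact N) * exp 1) (/ s))
    as [l [Hl Hp]]; auto using gamma_kernel_cont, beta_kernel_cont.
  - intros x Hx. split; [left; apply gamma_kernel_pos | apply gamma_kernel_le; auto; lra].
  - left. apply Rmult_lt_0_compat; [apply INR_fact_lt_0 | apply exp_pos].
  - intros; apply RInt_beta_kernel_r1_le; auto.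
  - replace (Gamma s) with l by (symmetry; exact (is_RInt_0oo_unique _ _ Hl)).
    split; auto. apply (RInt_partial_pos (gamma_kernel s));
      auto using gamma_kernel_cont, gamma_kernel_pos.
Qed.

Lemma is_RInt_Gamma s : 0 < s -> is_RInt_0oo (gamma_kernel s) (Gamma s).
Proof. intros Hs. apply (is_RInt_Gamma_pos s Hs). Qed.

Lemma Gamma_pos s : 0 < s -> 0 < Gamma s.
Proof. intros Hs. apply (is_RInt_Gamma_pos s Hs). Qed.

Lemma Gamma_succ s : 0 < s -> Gamma (s + 1) = s * Gamma s.
Proof.
  intros Hs.
  assert (HF : is_RInt_0oo (fun t => s * gamma_kernel s t - gamma_kernel (s + 1) t) (0 - 0)).
  { apply (is_RInt_0oo_derive (fun t => Rpower t s * exp (- t))).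
    - intros x Hx. unfold gamma_kernel. rewrite Rpower_minus_1 by lra.
      replace (s + 1 - 1) with s by ring.
      unfold Rpower. auto_derive; [lra |]. field. lra.
    - intros x Hx. apply continuous_of_ex_derive. unfold gamma_kernel, Rpower. auto_derive. lra.
    - apply (filterlim_squeeze_0 _ (fun t => Rpower t s)); [| apply lim_Rpower_at_0; auto].
      apply at_right_0_pos. intros t Ht. split.
      + left; apply Rmult_lt_0_compat; [apply Rpower_pos | apply exp_pos].
      + pose proof (Rpower_pos t s). rewrite <- (Rmult_1_r (Rpower t s)) at 2.
        apply Rmult_le_compat_l; [lra |]. rewrite exp_Ropp, <- Rinv_1.
        apply Rinv_le_contravar; [lra |]. pose proof (exp_ineq1_le t). lra.
    - apply lim_Rpower_exp_oo; auto. }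
  assert (H := is_RInt_gen_plus _ _ _ _ HF (is_RInt_Gamma (s + 1) ltac:(lra))).
  assert (E : 0 - 0 + Gamma (s + 1) = s * Gamma s); [| lra].
  apply (is_RInt_0oo_inj (fun t => s * gamma_kernel s t)).
  - refine (is_RInt_0oo_ext _ _ _ _ H). intros x _.
    change (s * gamma_kernel s x - gamma_kernel (s + 1) x + gamma_kernel (s + 1) x
            = s * gamma_kernel s x). ring.
  - apply (is_RInt_gen_scal (gamma_kernel s) s (Gamma s) (is_RInt_Gamma s Hs)).
Qed.

Lemma Gamma_1 : Gamma 1 = 1.
Proof.
  assert (HF : is_RInt_0oo (fun t => - exp (- t)) (0 - exp (- 0))).
  { apply (is_RInt_0oo_derive (fun t => exp (- t))).
    - intros x Hx. auto_derive; [auto | ring].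
    - intros x Hx. apply continuous_of_ex_derive. auto_derive. auto.
    - apply (filterlim_filter_le_1 (F := locally 0)); [apply filter_le_within |].
      apply (continuous_of_ex_derive (fun t => exp (- t)) 0). auto_derive. auto.
    - apply (filterlim_squeeze_0 _ (fun t => 1 / t)); [| apply lim_div_oo].
      exists 0. intros t Ht. split; [left; apply exp_pos |].
      rewrite exp_Ropp. unfold Rdiv. rewrite Rmult_1_l. apply Rinv_le_contravar; auto.
      pose proof (exp_ineq1_le t). lra. }
  rewrite Ropp_0, exp_0 in HF. apply is_RInt_gen_opp in HF.
  change (opp (0 - 1)) with (- (0 - 1)) in HF. replace 1 with (- (0 - 1)) at 2 by ring.
  apply (is_RInt_0oo_inj (gamma_kernel 1)); [apply is_RInt_Gamma, Rlt_0_1 |].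
  refine (is_RInt_0oo_ext _ _ _ _ HF). intros x Hx.
  unfold gamma_kernel. replace (1 - 1) with 0 by ring.
  rewrite Rpower_O by auto. change (- - exp (- x) = 1 * exp (- x)). ring.
Qed.

Lemma Gamma_add_nat s k : 0 < s -> Gamma (s + INR k) = poch s k * Gamma s.
Proof.
  intros Hs. induction k as [| k IHk]; [simpl; rewrite Rplus_0_r; ring |].
  rewrite S_INR. replace (s + (INR k + 1)) with ((s + INR k) + 1) by ring.
  rewrite Gamma_succ, IHk; [simpl; ring |]. pose proof (pos_INR k); lra.
Qed.

Definition Beta (a b : R) : R := RInt_gen (beta_kernel a b) (at_right 0) (Rbar_locally p_infty).

Lemma is_RInt_Beta_pos a b : 0 < a -> 0 < b -> is_RInt_0oo (beta_kernel a b) (Beta a b) /\ 0 < Beta a b.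
Proof.
  intros Ha Hb. destruct (ex_is_RInt_beta_kernel a b Ha Hb) as [l [Hl Hp]].
  unfold Beta. rewrite (is_RInt_0oo_unique _ _ Hl). auto.
Qed.

Lemma is_RInt_Beta a b : 0 < a -> 0 < b -> is_RInt_0oo (beta_kernel a b) (Beta a b).
Proof. intros Ha Hb. apply (is_RInt_Beta_pos a b Ha Hb). Qed.

Lemma Beta_pos a b : 0 < a -> 0 < b -> 0 < Beta a b.
Proof. intros Ha Hb. apply (is_RInt_Beta_pos a b Ha Hb). Qed.

Lemma Beta_succ_l a b : 0 < a -> 0 < b -> a * Beta a b = (a + b) * Beta (a + 1) b.
Proof.
  intros Ha Hb.
  assert (HF : is_RInt_0oo (fun x => a * beta_kernel a b x - (a + b) * beta_kernel (a + 1) b x)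
                 (0 - 0)).
  { apply (is_RInt_0oo_derive (fun x => Rpower x a * Rpower (1 + x) (- (a + b)))).
    - intros x Hx. unfold beta_kernel. rewrite (Rpower_minus_1 x a) by lra.
      replace (a + 1 - 1) with a by ring.
      replace (- (a + 1 + b)) with (- (a + b) - 1) by ring.
      rewrite (Rpower_minus_1 (1 + x)) by lra.
      unfold Rpower. auto_derive; [lra |]. field. lra.
    - intros x Hx. apply continuous_of_ex_derive. unfold beta_kernel, Rpower. auto_derive. lra.
    - apply (filterlim_squeeze_0 _ (fun t => Rpower t a)); [| apply lim_Rpower_at_0; auto].
      apply at_right_0_pos. intros t Ht. split.
      + left; apply Rmult_lt_0_compat; apply Rpower_pos.
      + pose proof (Rpower_pos t a). rewrite <- (Rmult_1_r (Rpower t a)) at 2.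
        apply Rmult_le_compat_l; [lra |]. apply Rpower_le_1; lra.
    - apply (filterlim_squeeze_0 _ (fun x => Rpower (1 + x) (- b))); [| apply lim_Rpower_oo; auto].
      exists 0. intros x Hx. split; [left; apply Rmult_lt_0_compat; apply Rpower_pos |].
      replace (- (a + b)) with (- a + - b) by ring. rewrite Rpower_plus, <- Rmult_assoc.
      rewrite <- (Rmult_1_l (Rpower (1 + x) (- b))) at 2.
      apply Rmult_le_compat_r; [left; apply Rpower_pos |].
      rewrite Rpower_Ropp. pose proof (Rpower_pos (1 + x) a).
      assert (Rpower x a <= Rpower (1 + x) a) by (apply Rpower_le_base; lra).
      apply (Rmult_le_reg_r (Rpower (1 + x) a)); auto.
      rewrite Rmult_assoc, Rinv_l; lra. }
  assert (Ha1 : 0 < a + 1) by lra.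
  assert (E : a * Beta a b - (a + b) * Beta (a + 1) b = 0 - 0); [| lra].
  exact (is_RInt_0oo_inj _ _ _ (is_RInt_gen_minus _ _ _ _
           (is_RInt_gen_scal _ a _ (is_RInt_Beta a b Ha Hb))
           (is_RInt_gen_scal _ (a + b) _ (is_RInt_Beta (a + 1) b Ha1 Hb))) HF).
Qed.

Lemma Beta_1_l b : 0 < b -> Beta 1 b = / b.
Proof.
  intros Hb.
  assert (HF : is_RInt_0oo (fun x => - beta_kernel 1 b x)
                 (0 - Rpower (1 + 0) (- b) / b)).
  { apply (is_RInt_0oo_derive (fun x => Rpower (1 + x) (- b) / b)).
    - intros x Hx. rewrite beta_kernel_1_l, (Rpower_minus_1 (1 + x)) by lra.
      unfold Rpower. auto_derive; [lra |]. field. lra.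
    - intros x Hx. apply continuous_of_ex_derive. unfold beta_kernel, Rpower. auto_derive. lra.
    - apply (filterlim_filter_le_1 (F := locally 0)); [apply filter_le_within |].
      apply (continuous_of_ex_derive (fun x => Rpower (1 + x) (- b) / b) 0).
      unfold Rpower. auto_derive. lra.
    - apply (filterlim_squeeze_0 _ (fun x => / b * Rpower (1 + x) (- b))).
      + exists 0. intros x Hx. pose proof (Rpower_pos (1 + x) (- b)).
        split; [left; apply Rdiv_lt_0_compat; auto | unfold Rdiv; rewrite Rmult_comm; lra].
      + replace 0 with (/ b * 0) by ring.
        apply (is_lim_scal_l (fun x => Rpower (1 + x) (- b)) (/ b) p_infty 0).
        apply lim_Rpower_oo; auto. }
  replace (Rpower (1 + 0) (- b)) with 1 in HF
    by (unfold Rpower; rewrite Rplus_0_r, ln_1, Rmult_0_r, exp_0; reflexivity).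
  apply is_RInt_gen_opp in HF.
  change (opp (0 - 1 / b)) with (- (0 - 1 / b)) in HF.
  replace (/ b) with (- (0 - 1 / b)) by (field; lra).
  apply (is_RInt_0oo_inj (beta_kernel 1 b)); [apply is_RInt_Beta; lra |].
  refine (is_RInt_0oo_ext _ _ _ _ HF). intros x Hx. change (- - beta_kernel 1 b x = beta_kernel 1 b x). ring.
Qed.

(** * Log-convexity and the Bohr-Mollerup theorem *)

Lemma exp_convex t al be : 0 <= t <= 1 ->
  exp (t * al + (1 - t) * be) <= t * exp al + (1 - t) * exp be.
Proof.
  intros Ht. set (m := t * al + (1 - t) * be).
  assert (Htangent : forall y, exp m * (1 + (y - m)) <= exp y).
  { intros y. pose proof (exp_ineq1_le (y - m)). replace y with (m + (y - m)) at 2 by ring.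
    rewrite exp_plus. apply Rmult_le_compat_l; [left; apply exp_pos | lra]. }
  pose proof (Rmult_le_compat_l t _ _ ltac:(lra) (Htangent al)).
  pose proof (Rmult_le_compat_l (1 - t) _ _ ltac:(lra) (Htangent be)).
  assert (t * (exp m * (1 + (al - m))) + (1 - t) * (exp m * (1 + (be - m))) = exp m)
    by (unfold m; ring).
  lra.
Qed.

Lemma weighted_am_gm u v t : 0 < u -> 0 < v -> 0 <= t <= 1 ->
  Rpower u t * Rpower v (1 - t) <= t * u + (1 - t) * v.
Proof.
  intros Hu Hv Ht. unfold Rpower. rewrite <- exp_plus.
  rewrite <- (exp_ln u) at 2 by auto. rewrite <- (exp_ln v) at 2 by auto.
  apply exp_convex; auto.
Qed.

(* Integrate the pointwise AM-GM inequality for [f1 / J1] and [f2 / J2]. *)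
Lemma is_RInt_0oo_holder (f1 f2 f3 : R -> R) (J1 J2 J3 t : R) : 0 <= t <= 1 ->
  (forall x, 0 < x -> 0 < f1 x) -> (forall x, 0 < x -> 0 < f2 x) ->
  (forall x, 0 < x -> f3 x = Rpower (f1 x) t * Rpower (f2 x) (1 - t)) ->
  is_RInt_0oo f1 J1 -> is_RInt_0oo f2 J2 -> is_RInt_0oo f3 J3 ->
  0 < J1 -> 0 < J2 -> J3 <= Rpower J1 t * Rpower J2 (1 - t).
Proof.
  intros Ht P1 P2 E H1 H2 H3 J1p J2p.
  set (C := Rpower J1 t * Rpower J2 (1 - t)).
  assert (Cp : 0 < C) by (apply Rmult_lt_0_compat; apply Rpower_pos).
  assert (H4 : is_RInt_0oo (fun x => C * (t / J1 * f1 x + (1 - t) / J2 * f2 x))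
                 (C * (t / J1 * J1 + (1 - t) / J2 * J2))).
  { exact (is_RInt_gen_scal _ C _ (is_RInt_gen_plus _ _ _ _
      (is_RInt_gen_scal f1 (t / J1) J1 H1) (is_RInt_gen_scal f2 ((1 - t) / J2) J2 H2))). }
  replace C with (C * (t / J1 * J1 + (1 - t) / J2 * J2)) by (field; lra).
  refine (is_RInt_0oo_le f3 _ J3 _ _ H3 H4).
  intros x Hx. rewrite E by auto.
  pose proof (P1 x Hx). pose proof (P2 x Hx).
  assert (Hy := weighted_am_gm (f1 x / J1) (f2 x / J2) t
                  ltac:(apply Rdiv_lt_0_compat; auto) ltac:(apply Rdiv_lt_0_compat; auto) Ht).
  rewrite !Rpower_div in Hy by auto.
  pose proof (Rpower_pos J1 t). pose proof (Rpower_pos J2 (1 - t)).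
  replace (Rpower (f1 x) t / Rpower J1 t * (Rpower (f2 x) (1 - t) / Rpower J2 (1 - t)))
    with ((Rpower (f1 x) t * Rpower (f2 x) (1 - t)) / C) in Hy by (unfold C; field; lra).
  apply (Rmult_le_compat_l C) in Hy; [| lra].
  replace (C * (Rpower (f1 x) t * Rpower (f2 x) (1 - t) / C))
    with (Rpower (f1 x) t * Rpower (f2 x) (1 - t)) in Hy by (field; lra).
  replace (C * (t / J1 * f1 x + (1 - t) / J2 * f2 x))
    with (C * (t * (f1 x / J1) + (1 - t) * (f2 x / J2))) by (field; lra).
  exact Hy.
Qed.

Definition log_convex (F : R -> R) := forall x y t, 0 < x -> 0 < y -> 0 <= t <= 1 ->
  F (t * x + (1 - t) * y) <= Rpower (F x) t * Rpower (F y) (1 - t).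

Lemma log_convex_of_integral (Phi : R -> R) (fam : R -> R -> R) (P Q : R -> R) :
  (forall a x, 0 < x -> fam a x = exp (a * P x + Q x)) ->
  (forall a, 0 < a -> is_RInt_0oo (fam a) (Phi a) /\ 0 < Phi a) ->
  log_convex Phi.
Proof.
  intros E H x y t Hx Hy Ht.
  assert (Hm : 0 < t * x + (1 - t) * y) by nra.
  destruct (H x Hx) as [H1 P1]. destruct (H y Hy) as [H2 P2]. destruct (H _ Hm) as [H3 P3].
  apply (is_RInt_0oo_holder (fam x) (fam y) (fam (t * x + (1 - t) * y))); auto.
  - intros r Hr. rewrite E by auto. apply exp_pos.
  - intros r Hr. rewrite E by auto. apply exp_pos.
  - intros r Hr. rewrite !E by auto. unfold Rpower. rewrite !ln_exp, <- exp_plus. f_equal. ring.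
Qed.

Lemma log_convex_mul F G : log_convex F -> log_convex G ->
  (forall x, 0 < x -> 0 < F x) -> (forall x, 0 < x -> 0 < G x) ->
  log_convex (fun a => F a * G a).
Proof.
  intros HF HG PF PG x y t Hx Hy Ht.
  assert (Hm : 0 < t * x + (1 - t) * y) by nra.
  rewrite <- !Rpower_mult_distr by auto.
  replace (Rpower (F x) t * Rpower (G x) t * (Rpower (F y) (1 - t) * Rpower (G y) (1 - t)))
    with ((Rpower (F x) t * Rpower (F y) (1 - t)) * (Rpower (G x) t * Rpower (G y) (1 - t)))
    by ring.
  apply Rmult_le_compat; auto; left; auto.
Qed.

Lemma log_convex_scal_r F c : 0 < c -> log_convex F -> (forall x, 0 < x -> 0 < F x) ->
  log_convex (fun a => F a * c).
Proof.
  intros Hc HF PF x y t Hx Hy Ht.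
  assert (E : Rpower c t * Rpower c (1 - t) = c).
  { rewrite <- Rpower_plus. replace (t + (1 - t)) with 1 by ring. apply Rpower_1; auto. }
  rewrite <- !Rpower_mult_distr by auto.
  replace (Rpower (F x) t * Rpower c t * (Rpower (F y) (1 - t) * Rpower c (1 - t)))
    with ((Rpower (F x) t * Rpower (F y) (1 - t)) * (Rpower c t * Rpower c (1 - t))) by ring.
  rewrite E. apply Rmult_le_compat_r; [lra | apply HF; auto].
Qed.

Record gamma_like (F : R -> R) : Prop := {
  gamma_like_pos : forall x, 0 < x -> 0 < F x;
  gamma_like_succ : forall x, 0 < x -> F (x + 1) = x * F x;
  gamma_like_1 : F 1 = 1;
  gamma_like_log_convex : log_convex F
}.

Section Bohr_Mollerup.

Variable F : R -> R.
Hypothesis HF : gamma_like F.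

Lemma gamma_like_fact k : F (INR (S k)) = INR (fact k).
Proof.
  induction k as [| k IHk]; [exact (gamma_like_1 F HF) |].
  rewrite S_INR, (gamma_like_succ F HF), IHk by (apply lt_0_INR; lia).
  rewrite fact_simpl, mult_INR. reflexivity.
Qed.

Lemma gamma_like_add_nat x k : 0 < x -> F (x + INR k) = poch x k * F x.
Proof.
  intros Hx. induction k as [| k IHk]; [simpl; rewrite Rplus_0_r; ring |].
  rewrite S_INR. replace (x + (INR k + 1)) with ((x + INR k) + 1) by ring.
  rewrite (gamma_like_succ F HF), IHk; [simpl; ring |]. pose proof (pos_INR k); lra.
Qed.

(* Log-convexity on the triples [n + x, n + x + 1, n + 1] and [n, n + x, n + 1]
   squeezes [(x)_(n) F x], where [n = k + 1]. *)
Lemma gamma_like_poch_bounds x k : 0 < x <= 1 ->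
  INR (fact (S k)) / Rpower (INR (S k) + x) (1 - x) <= poch x (S k) * F x /\
  poch x (S k) * F x <= INR (fact k) * Rpower (INR (S k)) x.
Proof.
  intros Hx. destruct HF as [P R1 F1 L].
  set (n := INR (S k)).
  assert (Hn : 1 <= n) by (unfold n; rewrite S_INR; pose proof (pos_INR k); lra).
  rewrite <- gamma_like_add_nat by lra. fold n. replace (x + n) with (n + x) by ring.
  assert (Fn : F n = INR (fact k)) by apply gamma_like_fact.
  assert (Fn1 : F (n + 1) = INR (fact (S k))).
  { rewrite <- (gamma_like_fact (S k)). unfold n. rewrite (S_INR (S k)). reflexivity. }
  assert (Hfk : 0 < INR (fact k)) by apply INR_fact_lt_0.
  assert (Hfn : INR (fact (S k)) = n * INR (fact k))
    by (unfold n; rewrite fact_simpl, mult_INR; reflexivity).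
  split.
  - assert (H := L (n + x) (n + x + 1) x ltac:(lra) ltac:(lra) ltac:(lra)).
    replace (x * (n + x) + (1 - x) * (n + x + 1)) with (n + 1) in H by ring.
    rewrite Fn1, R1 in H by lra.
    assert (Hp : 0 < F (n + x)) by (apply P; lra).
    rewrite <- Rpower_mult_distr in H by lra.
    replace (Rpower (F (n + x)) x * (Rpower (n + x) (1 - x) * Rpower (F (n + x)) (1 - x)))
      with (Rpower (n + x) (1 - x) * (Rpower (F (n + x)) x * Rpower (F (n + x)) (1 - x)))
      in H by ring.
    rewrite <- Rpower_plus in H. replace (x + (1 - x)) with 1 in H by ring.
    rewrite Rpower_1 in H by auto.
    pose proof (Rpower_pos (n + x) (1 - x)).
    apply (Rmult_le_reg_r (Rpower (n + x) (1 - x))); auto.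
    unfold Rdiv. rewrite Rmult_assoc, Rinv_l by lra. lra.
  - assert (H := L (n + 1) n x ltac:(lra) ltac:(lra) ltac:(lra)).
    replace (x * (n + 1) + (1 - x) * n) with (n + x) in H by ring.
    rewrite Fn1, Fn, Hfn in H.
    rewrite <- Rpower_mult_distr in H by lra.
    replace (Rpower n x * Rpower (INR (fact k)) x * Rpower (INR (fact k)) (1 - x)) with
      (Rpower n x * (Rpower (INR (fact k)) x * Rpower (INR (fact k)) (1 - x))) in H by ring.
    rewrite <- Rpower_plus in H. replace (x + (1 - x)) with 1 in H by ring.
    rewrite Rpower_1 in H by auto.
    lra.
Qed.

End Bohr_Mollerup.

Lemma poch_bounds_gap x k : 0 < x <= 1 ->
  INR (fact k) * Rpower (INR (S k)) x - INR (fact (S k)) / Rpower (INR (S k) + x) (1 - x)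
  <= INR (fact (S k)) / Rpower (INR (S k) + x) (1 - x) / INR (S k).
Proof.
  intros Hx. set (n := INR (S k)).
  assert (Hn : 1 <= n) by (unfold n; rewrite S_INR; pose proof (pos_INR k); lra).
  set (Lo := INR (fact (S k)) / Rpower (n + x) (1 - x)).
  assert (Hfn : INR (fact (S k)) = n * INR (fact k))
    by (unfold n; rewrite fact_simpl, mult_INR; reflexivity).
  pose proof (INR_fact_lt_0 k) as Hfk.
  assert (Hr : 0 < Rpower (n + x) (1 - x)) by apply Rpower_pos.
  assert (Lop : 0 < Lo) by (apply Rdiv_lt_0_compat; [apply INR_fact_lt_0 | auto]).
  assert (Hm : Rpower n x * Rpower (n + x) (1 - x) <= n + x).
  { apply Rle_trans with (Rpower (n + x) x * Rpower (n + x) (1 - x)).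
    - apply Rmult_le_compat_r; [lra | apply Rpower_le_base; lra].
    - rewrite <- Rpower_plus. replace (x + (1 - x)) with 1 by ring. rewrite Rpower_1 by lra. lra. }
  assert (Hq : INR (fact k) * Rpower n x * n <= Lo * (n + x)).
  { unfold Lo. rewrite Hfn.
    apply (Rmult_le_reg_r (Rpower (n + x) (1 - x))); auto.
    replace (n * INR (fact k) / Rpower (n + x) (1 - x) * (n + x) * Rpower (n + x) (1 - x))
      with (n * INR (fact k) * (n + x)) by (field; lra).
    replace (INR (fact k) * Rpower n x * n * Rpower (n + x) (1 - x)) with
      (n * INR (fact k) * (Rpower n x * Rpower (n + x) (1 - x))) by ring.
    apply Rmult_le_compat_l; nra. }
  assert (Lo * x <= Lo) by nra.
  apply (Rmult_le_reg_r n); [lra |]. unfold Rdiv. rewrite Rmult_assoc, Rinv_l by lra.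
  nra.
Qed.

Lemma gamma_like_unique_01 F G : gamma_like F -> gamma_like G ->
  forall x, 0 < x <= 1 -> F x = G x.
Proof.
  intros HF HG x Hx.
  assert (Gp : 0 < G x) by (apply (gamma_like_pos G HG); lra).
  assert (Hclose : forall k, INR (S k) * Rabs (F x - G x) <= G x).
  { intros k.
    destruct (gamma_like_poch_bounds F HF x k Hx) as [L1 U1].
    destruct (gamma_like_poch_bounds G HG x k Hx) as [L2 U2].
    pose proof (poch_bounds_gap x k Hx) as Hgap.
    assert (Pp : 0 < poch x (S k)) by (apply poch_pos; lra).
    assert (Hn : 0 < INR (S k)) by (apply lt_0_INR; lia).
    apply (Rmult_le_reg_l (poch x (S k))); [auto |].
    rewrite <- Rmult_assoc, (Rmult_comm _ (INR (S k))), Rmult_assoc.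
    rewrite <- (Rabs_pos_eq (poch x (S k))) at 1 by lra. rewrite <- Rabs_mult.
    apply (Rmult_le_reg_r (/ INR (S k))); [apply Rinv_0_lt_compat; auto |].
    replace (INR (S k) * Rabs (poch x (S k) * (F x - G x)) * / INR (S k))
      with (Rabs (poch x (S k) * (F x - G x))) by (field; lra).
    assert (Hdiv : INR (fact (S k)) / Rpower (INR (S k) + x) (1 - x) / INR (S k)
                   <= poch x (S k) * G x / INR (S k))
      by (apply Rmult_le_compat_r; [left; apply Rinv_0_lt_compat |]; auto).
    apply Rabs_le. unfold Rdiv in Hdiv. rewrite Rmult_minus_distr_l. split; lra. }
  destruct (Req_dec (F x) (G x)) as [E | NE]; auto. exfalso.
  assert (D : 0 < Rabs (F x - G x)) by (apply Rabs_pos_lt; lra).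
  destruct (INR_unbounded (G x / Rabs (F x - G x))) as [k Hk].
  assert (H := Hclose k). rewrite S_INR in H.
  apply (Rmult_lt_compat_r (Rabs (F x - G x))) in Hk; auto.
  unfold Rdiv in Hk. rewrite Rmult_assoc, Rinv_l in Hk by lra.
  nra.
Qed.

Theorem bohr_mollerup F G : gamma_like F -> gamma_like G -> forall x, 0 < x -> F x = G x.
Proof.
  intros HF HG x Hx.
  destruct (INR_unbounded x) as [N HN].
  revert x Hx HN. induction N as [| N IHN]; intros x Hx HN; [simpl in HN; lra |].
  destruct (Rle_lt_dec x 1) as [H1 | H1]; [apply gamma_like_unique_01; auto |].
  replace x with ((x - 1) + 1) by ring.
  rewrite (gamma_like_succ F HF), (gamma_like_succ G HG) by lra.
  f_equal. apply IHN; [lra |]. rewrite S_INR in HN. lra.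
Qed.

Lemma Gamma_gamma_like : gamma_like Gamma.
Proof.
  split; [exact Gamma_pos | exact Gamma_succ | exact Gamma_1 |].
  apply (log_convex_of_integral Gamma gamma_kernel ln (fun t => - ln t - t)).
  - intros a x Hx. unfold gamma_kernel, Rpower. rewrite <- exp_plus. f_equal. ring.
  - intros a Ha. split; [apply is_RInt_Gamma | apply Gamma_pos]; auto.
Qed.

Lemma Beta_gamma_like b : 0 < b -> gamma_like (fun a => Beta a b * Gamma (a + b) * / Gamma b).
Proof.
  intros Hb. pose proof (Gamma_pos b Hb) as Gb.
  split.
  - intros x Hx. apply Rmult_lt_0_compat; [apply Rmult_lt_0_compat |].
    + apply Beta_pos; auto.
    + apply Gamma_pos; lra.
    + apply Rinv_0_lt_compat; auto.
  - intros x Hx. pose proof (Beta_succ_l x b Hx Hb) as E.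
    replace (x + 1 + b) with ((x + b) + 1) by ring. rewrite Gamma_succ by lra.
    replace (Beta (x + 1) b) with (x * Beta x b / (x + b)) by (rewrite E; field; lra).
    field. lra.
  - replace (1 + b) with (b + 1) by ring. rewrite Gamma_succ, Beta_1_l by auto. field. lra.
  - apply log_convex_scal_r; [apply Rinv_0_lt_compat; auto | |].
    + apply log_convex_mul.
      * apply (log_convex_of_integral (fun a => Beta a b) (fun a => beta_kernel a b)
                 (fun x => ln x - ln (1 + x)) (fun x => - ln x - b * ln (1 + x))).
        -- intros a x Hx. unfold beta_kernel, Rpower. rewrite <- exp_plus. f_equal. ring.
        -- intros a Ha. split; [apply is_RInt_Beta | apply Beta_pos]; auto.
      * apply (log_convex_of_integral (fun a => Gamma (a + b)) (fun a => gamma_kernel (a + b))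
                 ln (fun t => (b - 1) * ln t - t)).
        -- intros a x Hx. unfold gamma_kernel, Rpower. rewrite <- exp_plus. f_equal. ring.
        -- intros a Ha. split; [apply is_RInt_Gamma | apply Gamma_pos]; lra.
      * intros x Hx. apply Beta_pos; auto.
      * intros x Hx. apply Gamma_pos; lra.
    + intros x Hx. apply Rmult_lt_0_compat; [apply Beta_pos | apply Gamma_pos]; lra.
Qed.

Theorem Beta_Gamma a b : 0 < a -> 0 < b -> Beta a b = Gamma a * Gamma b / Gamma (a + b).
Proof.
  intros Ha Hb.
  rewrite <- (bohr_mollerup _ _ (Beta_gamma_like b Hb) Gamma_gamma_like a Ha).
  pose proof (Gamma_pos b Hb). pose proof (Gamma_pos (a + b) ltac:(lra)).
  field. lra.
Qed.

(** * The orthogonality integral *)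

Definition weight (p q x : R) := Rpower x q / Rpower (1 + x) (p + q).

Lemma is_RInt_weight_monomial p q k l : q > -1 -> p - 1 - INR k - INR l > 0 ->
  is_RInt_0oo (fun x => weight p q x * (x ^ k * (1 + x) ^ l))
    (Gamma (q + 1 + INR k) * Gamma (p - 1 - INR k - INR l) / Gamma (p + q - INR l)).
Proof.
  intros Hq Hp. pose proof (pos_INR k).
  replace (p + q - INR l) with ((q + 1 + INR k) + (p - 1 - INR k - INR l)) by ring.
  rewrite <- Beta_Gamma by lra.
  apply (is_RInt_0oo_ext (beta_kernel (q + 1 + INR k) (p - 1 - INR k - INR l)));
    [| apply is_RInt_Beta; lra].
  intros x Hx. unfold beta_kernel, weight.
  replace (q + 1 + INR k - 1) with (q + INR k) by ring.
  replace (- (q + 1 + INR k + (p - 1 - INR k - INR l))) with (- (p + q) + INR l) by ring.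
  rewrite (Rpower_plus q (INR k) x), (Rpower_plus (- (p + q)) (INR l) (1 + x)),
    Rpower_Ropp, !Rpower_pow by lra.
  unfold Rdiv. ring.
Qed.

Definition Mcoef (u n : nat) (p q : R) (j : nat) : R :=
  (-1) ^ n * poch (q + 1) (u * n) *
  ((-1) ^ j * binomR n j * poch (INR n + 1 - p) (u * j) / poch (q + 1) (u * j) * (-1) ^ (u * j)).

Definition frakMcoef (u m : nat) (p q : R) (r s : nat) : R :=
  (-1) ^ (s + m) * binomR r s * (poch (p + q - INR m) r / INR (fact r))
  * poch ((INR s + q + 1) / INR u) m.

Lemma weight_Mpoly_frakM u n m p q x :
  weight p q x * Mpoly n p q u x * frakM m p q u x =
  sum_f_R0 (fun j => sum_f_R0 (fun r => sum_f_R0 (fun s =>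
     Mcoef u n p q j * frakMcoef u m p q r s
     * (weight p q x * (x ^ (u * j + r) * (1 + x) ^ (m - r)))) r) m) n.
Proof.
  unfold Mpoly, frakM. rewrite <- Rmult_assoc.
  rewrite (sum_f_R0_scal_l _ n (weight p q x * ((-1) ^ n * poch (q + 1) (u * n)))).
  rewrite sum_f_R0_scal_r. apply sum_eq. intros j Hj.
  rewrite sum_f_R0_scal_l. apply sum_eq. intros r Hr.
  rewrite sum_f_R0_scal_l. apply sum_eq. intros s Hs.
  unfold Mcoef, frakMcoef.
  replace (- x) with (-1 * x) by ring. rewrite Rpow_mult_distr, (pow_add x (u * j) r).
  ring.
Qed.

Lemma INR_succ_lt_of_le u N p k : p > (INR u + 1) * INR N + 1 ->
  (k <= (u + 1) * N)%nat -> INR k + 1 < p.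
Proof.
  intros Hp Hk. apply le_INR in Hk. rewrite mult_INR, plus_INR in Hk.
  change (INR 1) with 1 in Hk. lra.
Qed.

Lemma is_RInt_weight_Mpoly_frakM u n m p q :
  p > (INR u + 1) * INR (Nat.max n m) + 1 -> q > -1 ->
  is_RInt_0oo (fun x => weight p q x * Mpoly n p q u x * frakM m p q u x)
    (sum_f_R0 (fun j => sum_f_R0 (fun r => sum_f_R0 (fun s =>
       Mcoef u n p q j * frakMcoef u m p q r s *
       (Gamma (q + 1 + INR (u * j + r)) * Gamma (p - 1 - INR (u * j + r) - INR (m - r))
          / Gamma (p + q - INR (m - r)))) r) m) n).
Proof.
  intros Hp Hq.
  apply (is_RInt_0oo_ext _ _ _ (fun x _ => eq_sym (weight_Mpoly_frakM u n m p q x))).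
  apply is_RInt_0oo_sum; intros j Hj. apply is_RInt_0oo_sum; intros r Hr.
  apply is_RInt_0oo_sum; intros s Hs.
  apply is_RInt_0oo_scal, is_RInt_weight_monomial; [lra |].
  assert (H := INR_succ_lt_of_le u (Nat.max n m) p (u * j + m) Hp ltac:(nia)).
  rewrite plus_INR in H. rewrite plus_INR, minus_INR by lia. lra.
Qed.

(* The sum over [r] and [s] is [newton_poch_identity] with [c = q + 1 + u j],
   [A = (q + 1)/u], [B = 1/u], so that [A - B c = -j]. *)
Lemma frakM_moment_sum u m p q j : (0 < u)%nat -> p + q - INR m > 0 -> q > -1 ->
  p - 1 - INR m - INR (u * j) > 0 ->
  sum_f_R0 (fun r => sum_f_R0 (fun s => frakMcoef u m p q r s *
       (Gamma (q + 1 + INR (u * j + r)) * Gamma (p - 1 - INR (u * j + r) - INR (m - r))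
          / Gamma (p + q - INR (m - r)))) r) m
  = (-1) ^ m * Gamma (q + 1) * poch (q + 1) (u * j) * Gamma (p - 1 - INR m - INR (u * j))
      / Gamma (p + q - INR m) * poch (- INR j) m.
Proof.
  intros Hu Hpq Hq Hb.
  assert (Hu' : INR u <> 0) by (apply not_0_INR; lia).
  assert (Hc : 0 < q + 1 + INR (u * j)) by (pose proof (pos_INR (u * j)); lra).
  replace (poch (- INR j) m)
    with (poch ((q + 1) / INR u + / INR u * (- (q + 1 + INR (u * j)))) m)
    by (f_equal; rewrite mult_INR; field; auto).
  rewrite <- (newton_poch_identity m ((q + 1) / INR u) (/ INR u) (q + 1 + INR (u * j)) Hc).
  rewrite sum_f_R0_scal_l. apply sum_eq. intros r Hr.
  rewrite sum_f_R0_scal_l. apply sum_eq. intros s Hs.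
  rewrite (Gamma_add_nat (q + 1) (u * j + r)), poch_add by lra.
  replace (p + q - INR (m - r)) with ((p + q - INR m) + INR r) by (rewrite minus_INR by lia; ring).
  rewrite (Gamma_add_nat (p + q - INR m) r) by lra.
  replace (p - 1 - INR (u * j + r) - INR (m - r)) with (p - 1 - INR m - INR (u * j))
    by (rewrite plus_INR, minus_INR by lia; ring).
  unfold frakMcoef.
  replace ((INR s + q + 1) / INR u) with ((q + 1) / INR u + / INR u * INR s) by (field; auto).
  rewrite pow_add.
  pose proof (poch_pos (p + q - INR m) r ltac:(lra)).
  pose proof (Gamma_pos (p + q - INR m) ltac:(lra)).
  pose proof (INR_fact_neq_0 r).
  field. repeat split; auto; lra.
Qed.

Definition orth_sum (u n m : nat) (p : R) : R :=
  sum_f_R0 (fun j => (-1) ^ j * binomR n j * poch (p - INR n - INR (u * j)) (u * j)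
                     * Gamma (p - 1 - INR m - INR (u * j)) * poch (- INR j) m) n.

Lemma orth_sum_lt u n m p : (n < m)%nat -> orth_sum u n m p = 0.
Proof.
  intros H. apply sum_eq_R0. intros j Hj. rewrite poch_opp_nat_lt by lia. ring.
Qed.

Lemma orth_sum_diag u n p :
  orth_sum u n n p = INR (fact n) * poch (p - INR n - INR (u * n)) (u * n)
                     * Gamma (p - 1 - INR n - INR (u * n)).
Proof.
  unfold orth_sum. rewrite sum_f_R0_last by (intros j Hj; rewrite poch_opp_nat_lt by lia; ring).
  assert (Hsq : (-1) ^ n * (-1) ^ n = 1)
    by (rewrite <- pow_add; replace (n + n)%nat with (2 * n)%nat by lia; apply pow_1_even).
  rewrite poch_opp_nat_diag. unfold binomR. rewrite C_n_n. ring [Hsq].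
Qed.

(* After factoring out [Gamma (p - n)], the [j]-th term is [(-1)^j C(n,j)] times a
   polynomial of degree [m + (n - 1 - m) < n] in [j]. *)
Lemma orth_sum_gt u n m p : (m < n)%nat -> INR n + INR (u * n) < p -> orth_sum u n m p = 0.
Proof.
  intros Hmn Hp.
  assert (Hpos : forall j, (j <= n)%nat -> 0 < p - INR n - INR (u * j)).
  { intros j Hj. assert (INR (u * j) <= INR (u * n)) by (apply le_INR; nia). lra. }
  set (f := fun x => poch (- x) m * poch (p - INR n - INR u * x) (n - 1 - m)).
  assert (Hf : deg_le (n - 1) f).
  { replace (n - 1)%nat with (0 + m + (n - 1 - m))%nat by lia.
    apply (deg_le_ext _ (fun x => 1 * poch (0 + -1 * x) m
                                  * poch ((p - INR n) + (- INR u) * x) (n - 1 - m))).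
    - intros x. unfold f. replace (0 + -1 * x) with (- x) by ring.
      replace (p - INR n + - INR u * x) with (p - INR n - INR u * x) by ring. ring.
    - apply deg_le_mul_poch, deg_le_mul_poch, deg_le_const. }
  transitivity (Gamma (p - INR n) * sum_f_R0 (fun j => (-1) ^ j * binom n j * f (INR j)) n).
  - rewrite sum_f_R0_scal_l. apply sum_eq. intros j Hj.
    rewrite binomR_binom by lia. unfold f. rewrite <- mult_INR.
    replace (Gamma (p - 1 - INR m - INR (u * j)))
      with (poch (p - INR n - INR (u * j)) (n - 1 - m) * Gamma (p - INR n - INR (u * j)))
      by (rewrite <- Gamma_add_nat by (apply Hpos; auto);
          f_equal; rewrite !minus_INR by lia; simpl INR; ring).
    replace (Gamma (p - INR n))
      with (poch (p - INR n - INR (u * j)) (u * j) * Gamma (p - INR n - INR (u * j)))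
      by (rewrite <- Gamma_add_nat by (apply Hpos; auto); f_equal; ring).
    ring.
  - rewrite (alt_binom_sum_deg_lt n (n - 1) f) by (auto; lia). ring.
Qed.

Lemma orthogonality_sum u n m p q : (0 < u)%nat ->
  p > (INR u + 1) * INR (Nat.max n m) + 1 -> q > -1 ->
  sum_f_R0 (fun j => sum_f_R0 (fun r => sum_f_R0 (fun s =>
       Mcoef u n p q j * frakMcoef u m p q r s *
       (Gamma (q + 1 + INR (u * j + r)) * Gamma (p - 1 - INR (u * j + r) - INR (m - r))
          / Gamma (p + q - INR (m - r)))) r) m) n
  = (-1) ^ n * poch (q + 1) (u * n) * Gamma (q + 1) * (-1) ^ m / Gamma (p + q - INR m)
    * orth_sum u n m p.
Proof.
  intros Hu Hp Hq.
  assert (Hbound : forall k, (k <= (u + 1) * Nat.max n m)%nat -> INR k + 1 < p)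
    by (intros k; apply INR_succ_lt_of_le; auto).
  unfold orth_sum. rewrite sum_f_R0_scal_l. apply sum_eq. intros j Hj.
  transitivity (Mcoef u n p q j * sum_f_R0 (fun r => sum_f_R0 (fun s => frakMcoef u m p q r s *
       (Gamma (q + 1 + INR (u * j + r)) * Gamma (p - 1 - INR (u * j + r) - INR (m - r))
          / Gamma (p + q - INR (m - r)))) r) m).
  { rewrite sum_f_R0_scal_l. apply sum_eq. intros r Hr.
    rewrite sum_f_R0_scal_l. apply sum_eq. intros s Hs. ring. }
  assert (Hm := Hbound m ltac:(nia)).
  assert (Hj' := Hbound (u * j + m)%nat ltac:(nia)). rewrite plus_INR in Hj'.
  rewrite frakM_moment_sum by (auto; lra).
  unfold Mcoef.
  assert (Hrefl : poch (INR n + 1 - p) (u * j) * (-1) ^ (u * j)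
                  = poch (p - INR n - INR (u * j)) (u * j)).
  { rewrite poch_reflect. f_equal. ring. }
  pose proof (poch_pos (q + 1) (u * j) ltac:(lra)).
  pose proof (Gamma_pos (p + q - INR m) ltac:(lra)).
  rewrite <- Hrefl. field. lra.
Qed.

Lemma orthogonality_value u n m p q :
  p > (INR u + 1) * INR (Nat.max n m) + 1 -> q > -1 ->
  (-1) ^ n * poch (q + 1) (u * n) * Gamma (q + 1) * (-1) ^ m / Gamma (p + q - INR m)
    * orth_sum u n m p
  = INR (fact n) * Gamma (p - INR n) * Gamma (q + 1 + INR u * INR n)
     / ((p - 1 - INR n - INR u * INR n) * Gamma (p + q - INR n)) * kron_delta n m.
Proof.
  intros Hp Hq.
  assert (Hn := INR_succ_lt_of_le u (Nat.max n m) p (n + u * n) Hp ltac:(nia)).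
  rewrite plus_INR in Hn.
  unfold kron_delta. destruct (Nat.eqb_spec n m) as [<- | Hnm].
  - rewrite orth_sum_diag.
    replace (Gamma (p - INR n))
      with ((p - 1 - INR n - INR (u * n)) * poch (p - INR n - INR (u * n)) (u * n)
            * Gamma (p - 1 - INR n - INR (u * n))).
    2:{ replace (p - INR n) with ((p - 1 - INR n - INR (u * n)) + INR (S (u * n))) at 2
          by (rewrite S_INR; ring).
        rewrite Gamma_add_nat, poch_Sl by lra.
        replace (p - 1 - INR n - INR (u * n) + 1) with (p - INR n - INR (u * n)) by ring.
        ring. }
    replace (q + 1 + INR u * INR n) with ((q + 1) + INR (u * n)) by (rewrite mult_INR; ring).
    rewrite Gamma_add_nat by lra. pose proof (pos_INR (u * n)). rewrite mult_INR in *.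
    pose proof (Gamma_pos (p + q - INR n) ltac:(lra)).
    pose proof (Gamma_pos (p - 1 - INR n - INR u * INR n) ltac:(lra)).
    assert (Hsq : (-1) ^ n * (-1) ^ n = 1)
      by (rewrite <- pow_add; replace (n + n)%nat with (2 * n)%nat by lia; apply pow_1_even).
    field [Hsq]. lra.
  - destruct (proj1 (Nat.lt_gt_cases n m) Hnm) as [Hlt | Hgt].
    + rewrite orth_sum_lt by auto. ring.
    + rewrite orth_sum_gt by (auto; lra). ring.
Qed.

Theorem mainTheorem1 (u n m : nat) (p q : R) :
  (0 < u)%nat ->
  p > (INR u + 1) * INR (Nat.max n m) + 1 ->
  q > -1 ->
  is_RInt_gen
    (fun x => Rpower x q / Rpower (1 + x) (p + q)
              * Mpoly n p q u x * frakM m p q u x)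
    (at_right 0) (Rbar_locally p_infty)
    (INR (fact n) * Gamma (p - INR n) * Gamma (q + 1 + INR u * INR n)
     / ((p - 1 - INR n - INR u * INR n) * Gamma (p + q - INR n))
     * kron_delta n m).
Proof.
  intros Hu Hp Hq.
  rewrite <- (orthogonality_value u n m p q Hp Hq), <- (orthogonality_sum u n m p q Hu Hp Hq).
  exact (is_RInt_weight_Mpoly_frakM u n m p q Hp Hq).
Qed.
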